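(* Let $f_\bullet\colon X\to Z$ be any set mapping between finite metric spaces, let $V=\mathrm{PH}_0(X)$, $U=\mathrm{PH}_0(Z)$, and let $f_0\colon V_0\to U_0$ be the induced linear map. Then for all $a\in S^V$ and all $b\in S^U$, $\mathcal{M}^0_f(a,b)=\dim H_1(G(f_\bullet)_{(a,b)})$, i.e. $\mathcal{M}^0_f(a,b)$ equals the number of independent cycles (first Betti number) of the graph $G(f_\bullet)_{(a,b)}$.
   Context: All vector spaces are over $\mathbb{Z}_2$. For a finite metric space $(X,d^X)$ and $r\ge 0$, $\mathrm{VR}_r(X)$ is the graph with vertex set $X$ and edges $[x,y]$ with $d^X(x,y)\le r$; write $\mathrm{VR}^+_s(X)=\mathrm{VR}_s(X)$ and $\mathrm{VR}^-_s(X)=\bigcup_{r<s}\mathrm{VR}_r(X)$ (edges with $d^X(x,y)<s$). $\mathrm{PH}_0(X)$ is the persistence module $r\mapsto H_0(\mathrm{VR}_r(X))$ (vector space freely generated by connected components) with structure maps $\rho_{rs}$ induced by inclusion; in particular $\mathrm{PH}_0(X)_0$ has basis $X$. Since $X$ is finite, $\mathrm{PH}_0(X)\cong \bigoplus_{b>0}\kappa_{[0,b)}^{m^V(b)}\oplus\kappa_{[0,\infty)}$; the barcode is the multiset $(S^V,m^V)$ with $S^V\subset(0,\infty)$ the set of finite $b$ with $m^V(b)>0$ (the infinite bar is excluded). For a persistence module $U$ and $b>0$ let $\ker^+_b(U)=\ker(\rho^U_{0b})$ and $\ker^-_b(U)=\bigcup_{0\le r<b}\ker(\rho^U_{0r})$,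 subspaces of $U_0$. For a set mapping $f_\bullet\colon X\to Z$, $f_0\colon V_0\to U_0$ is the linear map sending the basis element $x$ to $f_\bullet(x)$, and for $a,b>0$ $$\mathcal{M}^0_f(a,b)=\dim\frac{f_0(\ker^+_a V)\cap \ker^+_b U}{f_0(\ker^-_a V)\cap\ker^+_b U+f_0(\ker^+_a V)\cap \ker^-_b U}.$$ For $a,b>0$, $f_\bullet(\mathrm{VR}^\pm_a(X))$ denotes the graph with vertex set $f_\bullet(X)$ and edges $[f_\bullet(x),f_\bullet(y)]$ for edges $[x,y]$ of $\mathrm{VR}^\pm_a(X)$. Let $\mathcal{A}=f_\bullet(\mathrm{VR}^+_a(X))\cup\mathrm{VR}^-_b(Z)$, $\mathcal{B}=f_\bullet(\mathrm{VR}^-_a(X))\cup \mathrm{VR}^+_b(Z)$, $\mathcal{C}=f_\bullet(\mathrm{VR}^-_a(X))\cup\mathrm{VR}^-_b(Z)$, all graphs on vertex set $Z$, so $\mathcal{C}\subseteq\mathcal{A},\mathcal{B}$. Let $\pi_0$ denote the set of connected components, and $\iota\colon\pi_0(\mathcal{C})\to\pi_0(\mathcal{A})$, $\mu\colon\pi_0(\mathcal{C})\to\pi_0(\mathcal{B})$ the maps induced by inclusion. $G(f_\bullet)_{(a,b)}$ is the graph with vertex set the disjoint union $\pi_0(\mathcal{A})\sqcup\pi_0(\mathcal{C})\sqcup\pi_0(\mathcal{B})$ and edges $(c,\iota(c))$ and $(c,\mu(c))$ for all $c\in\pi_0(\mathcal{C})$. *)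

From mathcomp Require Import all_boot all_order all_algebra.
From mathcomp Require Import boolp reals.
Set Implicit Arguments. Unset Strict Implicit. Unset Printing Implicit Defensive.
Import Order.TTheory GRing.Theory Num.Theory.
Local Open Scope ring_scope.

Definition F2 := ('F_2)^o.

(* Z_2-chains on a finite set T: the vector space freely generated by T. *)
Definition chains (T : finType) := {ffun T -> F2}.

Definition is_metric (R : realType) (T : finType) (d : T -> T -> R) : Prop :=
  [/\ forall x y, 0 <= d x y,
      forall x y, d x y = 0 <-> x = y,
      forall x y, d x y = d y x &
      forall x y z, d x z <= d x y + d y z].

(** Undirected graphs on a finite vertex set, given by an edge relation;
    we symmetrize so that connectivity is the undirected one. *)
Definition usym (T : finType) (e : rel T) : rel T := fun x y => e x y || e y x.

Lemma usym_sym (T : finType) (e : rel T) : symmetric (usym e).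
Proof. by move=> x y; rewrite /usym orbC. Qed.

(* pi_0 of the graph: connected components, represented by their canonical
   root (fingraph's [root]). *)
Definition comp (T : finType) (e : rel T) := {x : T | fingraph.root (usym e) x == x}.

Lemma root_is_root (T : finType) (e : rel T) (x : T) :
  fingraph.root (usym e) (fingraph.root (usym e) x) == fingraph.root (usym e) x.
Proof. by rewrite root_root //; apply: sym_connect_sym; apply: usym_sym. Qed.

Definition comp_of (T : finType) (e : rel T) (x : T) : comp e :=
  exist _ (fingraph.root (usym e) x) (root_is_root e x).

(* H_0 of a graph = free vector space on components; the map induced by the
   inclusion of the discrete graph (basis x |-> its component). *)
Definition H0map (T : finType) (e : rel T) (v : chains T) : {ffun comp e -> F2} :=
  [ffun c => \sum_(x | comp_of e x == c) v x].

Lemma H0map_linear (T : finType) (e : rel T) : linear (@H0map T e).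
Proof.
move=> k u v; apply/ffunP => c; rewrite !ffunE scaler_sumr -big_split /=.
by apply: eq_bigr => x _; rewrite !ffunE.
Qed.

Definition VR (R : realType) (T : finType) (d : T -> T -> R) (r : R) : rel T :=
  fun x y => d x y <= r.

Definition rho0 (R : realType) (T : finType) (d : T -> T -> R) (r : R) :
  'Hom(chains T, {ffun comp (VR d r) -> F2}) := linfun (@H0map T (VR d r)).

Definition kerP (R : realType) (T : finType) (d : T -> T -> R) (b : R) :
  {vspace chains T} := lker (rho0 d b).

(* ker^-_b = union over 0 <= r < b of ker rho_{0r} (a nested union of
   subspaces; we take its span, which is the union itself). *)
Definition kerM (R : realType) (T : finType) (d : T -> T -> R) (b : R) :
  {vspace chains T} :=
  <<[seq v <- enum (chains T) |
      `[< exists r : R, (0 <= r)%R /\ (r < b)%R /\ v \in lker (rho0 d r) >]]>>%VS.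

(* The barcode support S^V of PH_0(X): the finite death times b > 0 with
   positive multiplicity m^V(b) = dim (ker^+_b / ker^-_b). *)
Definition barcode (R : realType) (T : finType) (d : T -> T -> R) (b : R) : Prop :=
  0 < b /\ (\dim (kerM d b) < \dim (kerP d b))%N.

Definition pushf (X Z : finType) (f : X -> Z) (v : chains X) : chains Z :=
  [ffun z => \sum_(x | f x == z) v x].

Lemma pushf_linear (X Z : finType) (f : X -> Z) : linear (pushf f).
Proof.
move=> k u v; apply/ffunP => z; rewrite !ffunE scaler_sumr -big_split /=.
by apply: eq_bigr => x _; rewrite !ffunE.
Qed.

Definition f0 (X Z : finType) (f : X -> Z) : 'Hom(chains X, chains Z) :=
  linfun (pushf f).

(* dimension of a quotient of subspaces (used with B <= A) *)
Definition qdim (K : fieldType) (vT : vectType K) (A B : {vspace vT}) : nat :=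
  (\dim A - \dim B)%N.

Definition Mf (R : realType) (X Z : finType) (dX : X -> X -> R) (dZ : Z -> Z -> R)
  (f : X -> Z) (a b : R) : nat :=
  qdim ((f0 f @: kerP dX a) :&: kerP dZ b)%VS
       (((f0 f @: kerM dX a) :&: kerP dZ b) + ((f0 f @: kerP dX a) :&: kerM dZ b))%VS.

(* f(VR^+_a(X)) (strict = false) or f(VR^-_a(X)) (strict = true) *)
Definition fVR (R : realType) (X Z : finType) (dX : X -> X -> R) (f : X -> Z)
  (strict : bool) (a : R) : rel Z :=
  fun z w => [exists x, exists y,
     [&& f x == z, f y == w & (if strict then dX x y < a else dX x y <= a)]].

Definition VRs (R : realType) (T : finType) (d : T -> T -> R)
  (strict : bool) (b : R) : rel T :=
  fun x y => if strict then d x y < b else d x y <= b.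

Definition grA (R : realType) (X Z : finType) (dX : X -> X -> R) (dZ : Z -> Z -> R)
  (f : X -> Z) (a b : R) : rel Z :=
  fun z w => fVR dX f false a z w || VRs dZ true b z w.
Definition grB (R : realType) (X Z : finType) (dX : X -> X -> R) (dZ : Z -> Z -> R)
  (f : X -> Z) (a b : R) : rel Z :=
  fun z w => fVR dX f true a z w || VRs dZ false b z w.
Definition grC (R : realType) (X Z : finType) (dX : X -> X -> R) (dZ : Z -> Z -> R)
  (f : X -> Z) (a b : R) : rel Z :=
  fun z w => fVR dX f true a z w || VRs dZ true b z w.

(** The graph G(f)_(a,b): vertices pi0(A) + pi0(C) + pi0(B), and for every
    c in pi0(C) an edge (c, false) between c and iota(c), and an edge
    (c, true) between c and mu(c). *)
Section GraphG.
Variables (R : realType) (X Z : finType) (dX : X -> X -> R) (dZ : Z -> Z -> R)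
  (f : X -> Z) (a b : R).

Definition GV : finType := (comp (grA dX dZ f a b) + comp (grC dX dZ f a b)
                            + comp (grB dX dZ f a b))%type.
Definition GE : finType := (comp (grC dX dZ f a b) * bool)%type.

Definition iota_ (c : comp (grC dX dZ f a b)) : comp (grA dX dZ f a b) :=
  comp_of (grA dX dZ f a b) (val c).
Definition mu_ (c : comp (grC dX dZ f a b)) : comp (grB dX dZ f a b) :=
  comp_of (grB dX dZ f a b) (val c).

Definition Gsrc (ed : GE) : GV := inl (inr ed.1).
Definition Gtgt (ed : GE) : GV :=
  if ed.2 then inr (mu_ ed.1) else inl (inl (iota_ ed.1)).

Definition Gbd (v : chains GE) : chains GV :=
  [ffun w => \sum_(ed | Gsrc ed == w) v ed + \sum_(ed | Gtgt ed == w) v ed].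

Lemma Gbd_linear : linear Gbd.
Proof.
move=> k u v; apply/ffunP => w; rewrite !ffunE scalerDr !scaler_sumr addrACA -!big_split /=.
by congr (_ + _); apply: eq_bigr => x _; rewrite !ffunE.
Qed.

(* H_1(G) = ker of the boundary (G has no 2-cells) *)
Definition H1G : {vspace chains GE} := lker (linfun Gbd).

End GraphG.

(* For a graph on T, the kernel of C_0(T) -> H_0 is its space B(e) of 0-boundaries, spanned by
   the differences of the endpoints of its edges; hence B is additive under union of edge sets
   and commutes with pushing forward along f. With K1 = f_0(ker^+_a V), K0 = f_0(ker^-_a V),
   L1 = ker^+_b U and L0 = ker^-_b U this gives B(A) = K1 + L0, B(B) = K0 + L1 and
   B(C) = K0 + L0, and the modular law turns M^0_f(a,b) into dim (B(A) :&: B(B)) / B(C).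
   On the other side, every vertex of G coming from pi_0(C) has exactly two incident edges, so a
   Z_2-cycle of G is a chain u on pi_0(C), doubled, with iota_* u = 0 = mu_* u; these u form the
   image of B(A) :&: B(B) in H_0(C) = C_0 / B(C). *)

From Pilot Require Import Defs.
From HB Require Import structures.
From mathcomp Require Import all_boot all_order all_algebra.
From mathcomp Require Import boolp reals.
From mathcomp Require Import zify.
Set Implicit Arguments. Unset Strict Implicit. Unset Printing Implicit Defensive.
Import Order.TTheory GRing.Theory Num.Theory.
Local Open Scope ring_scope.

(* Plain [comp] would resolve to function composition. *)
Local Notation pi0 := Defs.comp.

HB.instance Definition _ (X Z : finType) (f : X -> Z) :=
  GRing.isLinear.Build F2 (chains X) (chains Z) _ (pushf f) (pushf_linear f).
HB.instance Definition _ (T : finType) (e : rel T) :=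
  GRing.isLinear.Build F2 (chains T) {ffun pi0 e -> F2} _ (@H0map T e) (@H0map_linear T e).

Lemma F2_addrr (x : F2) : x + x = 0.
Proof. exact/addrr_pchar2/(pchar_Fp (isT : prime 2)). Qed.

Lemma F2_addr0_eq (x y : F2) : x + y = 0 -> x = y.
Proof. by move=> xy0; rewrite -[y]add0r -xy0 -addrA F2_addrr addr0. Qed.

Definition delta (T : finType) (z : T) : chains T := [ffun y => (y == z)%:R].

Lemma chain_sum_delta (T : finType) (v : chains T) : v = \sum_x v x *: delta x.
Proof.
apply/ffunP => y; rewrite sum_ffunE (bigD1 y) //= big1 => [|x /negbTE yx].
  by rewrite !ffunE eqxx addr0 [_ *: _]mulr1.
by rewrite !ffunE eq_sym yx [_ *: _]mulr0.
Qed.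

Lemma pushf_delta (X Z : finType) (f : X -> Z) (x : X) :
  pushf f (delta x) = delta (f x).
Proof.
apply/ffunP => z; rewrite !ffunE big_mkcond (bigD1 x) //= ffunE eqxx.
rewrite big1 ?addr0 => [|y /negbTE yx]; last by rewrite ffunE yx; case: ifP.
by rewrite eq_sym; case: (_ == _).
Qed.

Lemma pushf_comp (X Y Z : finType) (g : X -> Y) (h : Y -> Z) (v : chains X) :
  pushf h (pushf g v) = pushf (h \o g) v.
Proof.
apply/ffunP => z; rewrite !ffunE.
under eq_bigr do rewrite ffunE.
rewrite [RHS](partition_big g (fun y => h y == z)) //=.
apply: eq_bigr => y /eqP hy; apply: eq_bigl => x.
by rewrite andb_idl // => /eqP ->; rewrite hy.
Qed.

Lemma eq_pushf (X Z : finType) (g h : X -> Z) : g =1 h -> pushf g =1 pushf h.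
Proof. by move=> gh v; apply/ffunP => z; rewrite !ffunE; apply: eq_bigl => x; rewrite gh. Qed.

Lemma pushf_eq0P (X Z : finType) (f : X -> Z) (u : chains X) :
  reflect (forall z, \sum_(x | f x == z) u x = 0) (pushf f u == 0).
Proof.
apply: (iffP eqP) => [u0 z | u0]; last by apply/ffunP => z; rewrite !ffunE u0.
by have := congr1 (fun v : chains Z => v z) u0; rewrite !ffunE.
Qed.

Lemma H0mapE (T : finType) (e : rel T) : H0map e =1 pushf (comp_of e).
Proof. by []. Qed.

Lemma comp_of_val (T : finType) (e : rel T) (c : pi0 e) : comp_of e (val c) = c.
Proof. by apply: val_inj; apply/eqP; exact: (valP c). Qed.

Lemma comp_of_connect (T : finType) (e : rel T) (z w : T) :
  connect (usym e) z w -> comp_of e z = comp_of e w.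
Proof.
by move=> zw; apply: val_inj => /=; apply/(fingraph.rootP (sym_connect_sym (usym_sym e))).
Qed.

Section Boundaries.
Variable T : finType.
Implicit Types (e : rel T) (S : {vspace chains T}).

Definition boundaries e : {vspace chains T} := lker (linfun (H0map e)).

Lemma boundaries_connect e z w : connect (usym e) z w -> delta z - delta w \in boundaries e.
Proof.
move=> zw; rewrite memv_ker lfunE /= linearB /= !H0mapE !pushf_delta.
by rewrite (comp_of_connect zw) subrr.
Qed.

Lemma boundaries_edge e z w : e z w -> delta z - delta w \in boundaries e.
Proof. by move=> ezw; apply/boundaries_connect/connect1; rewrite /usym ezw. Qed.

Lemma connect_delta_sub e S : (forall z w, e z w -> delta z - delta w \in S) ->
  forall z w, connect (usym e) z w -> delta z - delta w \in S.
Proof.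
move=> eS z w /connectP [p + ->]; elim: p z => [|y p IHp] z /=.
  by rewrite subrr mem0v.
case/andP => ezy /IHp yS; rewrite -[delta z](subrK (delta y)) -addrA memvD //.
by case/orP: ezy => [/eS //| /eS]; rewrite -opprB memvN.
Qed.

Lemma boundaries_min e S :
  (forall z w, e z w -> delta z - delta w \in S) -> (boundaries e <= S)%VS.
Proof.
move=> eS; apply/subvP => v; rewrite memv_ker lfunE /= => /eqP v0.
pose r := fingraph.root (usym e).
have push_r0 : pushf r v = 0.
  by rewrite (@eq_pushf _ _ _ (val \o comp_of e)) // -pushf_comp -H0mapE v0 linear0.
have -> : v = \sum_x v x *: (delta x - delta (r x)) + pushf r v.
  rewrite [X in pushf _ X]chain_sum_delta linear_sum -big_split [LHS]chain_sum_delta.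
  by apply: eq_bigr => x _; rewrite linearZ /= pushf_delta -scalerDr subrK.
rewrite push_r0 addr0; apply: memv_suml => x _; apply/memvZ/(connect_delta_sub eS).
exact: connect_root.
Qed.

Lemma boundaries_mono e e' : subrel e e' -> (boundaries e <= boundaries e')%VS.
Proof. by move=> ee'; apply: boundaries_min => z w /ee'; apply: boundaries_edge. Qed.

Lemma boundariesU e e' :
  boundaries (fun z w => e z w || e' z w) = (boundaries e + boundaries e')%VS.
Proof.
apply/eqP; rewrite eqEsubv subv_add; apply/and3P; split.
- by apply: boundaries_min => z w /orP [] /boundaries_edge; apply/subvP;
    [apply: addvSl | apply: addvSr].
- by apply: boundaries_mono => z w ->.
- by apply: boundaries_mono => z w ->; rewrite orbT.
Qed.

End Boundaries.

Lemma pushf_boundaries (X Z : finType) (f : X -> Z) (e : rel X) :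
  (linfun (pushf f) @: boundaries e)%VS =
  boundaries (fun z w => [exists x, exists y, [&& f x == z, f y == w & e x y]]).
Proof.
apply/eqP; rewrite eqEsubv; apply/andP; split.
  apply/subvP => _ /memv_imgP [v + ->]; rewrite memv_preim; move: v; apply/subvP.
  apply: boundaries_min => x y exy.
  rewrite -memv_preim lfunE /= linearB /= !pushf_delta; apply: boundaries_edge.
  by apply/existsP; exists x; apply/existsP; exists y; rewrite !eqxx exy.
apply: boundaries_min => z w /existsP [x /existsP [y /and3P [/eqP <- /eqP <- exy]]].
rewrite -!pushf_delta -linearB /= -(lfunE (pushf f)); apply: memv_img.
exact: boundaries_edge.
Qed.

Lemma kerP_boundaries (R : realType) (T : finType) (d : T -> T -> R) (b : R) :
  kerP d b = boundaries (VRs d false b).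
Proof. by []. Qed.

Lemma kerM_boundaries (R : realType) (T : finType) (d : T -> T -> R) (b : R) :
  (forall x y, 0 <= d x y) -> kerM d b = boundaries (VRs d true b).
Proof.
move=> d_ge0; apply/eqP; rewrite eqEsubv; apply/andP; split.
  apply/span_subvP => v; rewrite mem_filter => /andP [/asboolP [r [_ [rb]]] + _].
  by apply/subvP/boundaries_mono => z w /le_lt_trans; apply.
apply: boundaries_min => z w /= dzw; apply: memv_span; rewrite mem_filter mem_enum andbT.
apply/asboolP; exists (d z w); split; [exact: d_ge0 | split=> //].
exact: (@boundaries_edge _ (VR d (d z w)) z w (lexx _)).
Qed.

Lemma f0_kerP (R : realType) (X Z : finType) (dX : X -> X -> R) (f : X -> Z) (a : R) :
  (f0 f @: kerP dX a)%VS = boundaries (fVR dX f false a).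
Proof. by rewrite kerP_boundaries /f0 pushf_boundaries. Qed.

Lemma f0_kerM (R : realType) (X Z : finType) (dX : X -> X -> R) (f : X -> Z) (a : R) :
  (forall x y, 0 <= dX x y) -> (f0 f @: kerM dX a)%VS = boundaries (fVR dX f true a).
Proof. by move=> dX_ge0; rewrite kerM_boundaries // /f0 pushf_boundaries. Qed.

(* Both sides compute dim (K0 + L0 + K1 :&: L1) / (K0 + L0), by the modular law. *)
Lemma dimv_butterfly (K : fieldType) (vT : vectType K) (K0 K1 L0 L1 : {vspace vT}) :
  (K0 <= K1)%VS -> (L0 <= L1)%VS ->
  (\dim (K1 :&: L1) - \dim (K0 :&: L1 + K1 :&: L0))%N =
  (\dim ((K1 + L0) :&: (K0 + L1)) - \dim (K0 + L0))%N.
Proof.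
move=> sK sL.
have capE : ((K1 + L0) :&: (K0 + L1) = (K0 + L0) + K1 :&: L1)%VS.
  rewrite -addvA vspace_modl // [in RHS]capvC vspace_modl; last first.
    exact: subv_trans sK (addvSr _ _).
  by rewrite capvC [(L0 + K1)%VS]addvC.
have sumE : ((K0 + L0) :&: (K1 :&: L1) = K0 :&: L1 + K1 :&: L0)%VS.
  rewrite [(K0 :&: L1)%VS]capvC vspace_modr; last exact: subv_trans (capvSr _ _) sL.
  by rewrite [(K1 :&: L0)%VS]capvC vspace_modl // capvA capvC.
have := dimv_sum_cap (K0 + L0) (K1 :&: L1); rewrite -capE sumE.
lia.
Qed.

Definition H0ind (T : finType) (e e' : rel T) (c : pi0 e) : pi0 e' := comp_of e' (val c).
Arguments H0ind {T} e e'.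

Section InducedMaps.
Variable T : finType.
Implicit Types (e : rel T) (v : chains T).

Lemma H0map_val e (u : chains (pi0 e)) : H0map e (pushf val u) = u.
Proof.
rewrite H0mapE pushf_comp (@eq_pushf _ _ _ id) => [|c]; last exact: comp_of_val.
by apply/ffunP => c; rewrite ffunE big_pred1_eq.
Qed.

Lemma H0ind_comp_of e e' x : subrel e e' -> H0ind e e' (comp_of e x) = comp_of e' x.
Proof.
move=> ee'; apply: comp_of_connect.
have root_x : connect (usym e) (fingraph.root (usym e) x) x.
  by rewrite (sym_connect_sym (usym_sym e)) connect_root.
apply: connect_sub root_x => z w ezw; apply: connect1.
by case/orP: ezw => /ee' e'zw; rewrite /usym e'zw ?orbT.
Qed.

Lemma H0map_ind e e' v : subrel e e' -> pushf (H0ind e e') (H0map e v) = H0map e' v.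
Proof. by move=> ee'; rewrite H0mapE pushf_comp; apply: eq_pushf => x; apply: H0ind_comp_of. Qed.

Variables (e e1 e2 : rel T).
Hypotheses (ee1 : subrel e e1) (ee2 : subrel e e2).

Definition ker_H0ind2 : {vspace chains (pi0 e)} :=
  (lker (linfun (pushf (H0ind e e1))) :&: lker (linfun (pushf (H0ind e e2))))%VS.

Lemma ker_H0ind2E : ker_H0ind2 = (linfun (H0map e) @: (boundaries e1 :&: boundaries e2))%VS.
Proof.
apply/eqP; rewrite eqEsubv; apply/andP; split.
  apply/subvP => u /memv_capP [u1 u2].
  rewrite memv_ker lfunE /= in u1; rewrite memv_ker lfunE /= in u2.
  rewrite -[u]H0map_val -(lfunE (H0map e)); apply/memv_img/memv_capP.
  split; rewrite memv_ker lfunE /=.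
    by rewrite -(H0map_ind _ ee1) H0map_val.
  by rewrite -(H0map_ind _ ee2) H0map_val.
apply/subvP => _ /memv_imgP [v /memv_capP [v1 v2] ->].
rewrite memv_ker lfunE /= in v1; rewrite memv_ker lfunE /= in v2.
by apply/memv_capP; split; rewrite memv_ker !lfunE /= H0map_ind.
Qed.

Lemma dim_ker_H0ind2 :
  \dim ker_H0ind2 = (\dim (boundaries e1 :&: boundaries e2) - \dim (boundaries e))%N.
Proof.
have := limg_ker_dim (linfun (H0map e)) (boundaries e1 :&: boundaries e2).
have -> : (boundaries e1 :&: boundaries e2 :&: lker (linfun (H0map e)) = boundaries e)%VS.
  by apply/capv_idPr; rewrite subv_cap; apply/andP; split; apply: boundaries_mono.
by rewrite -ker_H0ind2E => <-; rewrite addKn.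
Qed.

End InducedMaps.

Lemma sum_prod_bool (V : nmodType) (I : finType) (P : pred (I * bool)) (F : I * bool -> V) :
  \sum_(ed | P ed) F ed =
  \sum_i ((if P (i, true) then F (i, true) else 0) + (if P (i, false) then F (i, false) else 0)).
Proof.
rewrite big_mkcond; set G := fun ed => if P ed then F ed else 0.
rewrite (eq_bigr (fun p => G (p.1, p.2))) => [|[] //].
by rewrite -(pair_big xpredT xpredT (fun i j => G (i, j))); apply: eq_bigr => i _; rewrite big_bool.
Qed.

Definition double (I : finType) (u : chains I) : chains (I * bool)%type := [ffun ed => u ed.1].

Lemma double_linear (I : finType) : linear (@double I).
Proof. by move=> k u v; apply/ffunP => ed; rewrite !ffunE. Qed.

HB.instance Definition _ (I : finType) :=
  GRing.isLinear.Build F2 (chains I) (chains (I * bool)%type) _ (@double I) (@double_linear I).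

Lemma double_inj (I : finType) : injective (@double I).
Proof.
move=> u v uv; apply/ffunP => i.
by have := congr1 (fun g : chains (I * bool)%type => g (i, false)) uv; rewrite !ffunE.
Qed.

Lemma subrel_fVR (R : realType) (X Z : finType) (dX : X -> X -> R) (f : X -> Z) (a : R) :
  subrel (fVR dX f true a) (fVR dX f false a).
Proof.
move=> z w /existsP [x /existsP [y /and3P [fx fy /ltW dxy]]].
by apply/existsP; exists x; apply/existsP; exists y; rewrite fx fy.
Qed.

Lemma subrel_VRs (R : realType) (T : finType) (d : T -> T -> R) (b : R) :
  subrel (VRs d true b) (VRs d false b).
Proof. by move=> z w /ltW. Qed.

Section GraphG.
Variables (R : realType) (X Z : finType) (dX : X -> X -> R) (dZ : Z -> Z -> R)
  (f : X -> Z) (a b : R).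
Local Notation gA := (grA dX dZ f a b).
Local Notation gB := (grB dX dZ f a b).
Local Notation gC := (grC dX dZ f a b).
Local Notation GE := (GE dX dZ f a b).
Local Notation GV := (GV dX dZ f a b).
Local Notation iota := (@iota_ R X Z dX dZ f a b).
Local Notation mu := (@mu_ R X Z dX dZ f a b).
Local Notation Gbd := (@Gbd R X Z dX dZ f a b).

HB.instance Definition _ :=
  GRing.isLinear.Build F2 (chains GE) (chains GV) _ Gbd (@Gbd_linear R X Z dX dZ f a b).

Lemma subrel_grCA : subrel gC gA.
Proof. by move=> z w; rewrite /grA /grC => /orP [/subrel_fVR|] ->; rewrite ?orbT. Qed.

Lemma subrel_grCB : subrel gC gB.
Proof. by move=> z w; rewrite /grB /grC => /orP [|/subrel_VRs] ->; rewrite ?orbT. Qed.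

Lemma boundaries_grA :
  boundaries gA = (boundaries (fVR dX f false a) + boundaries (VRs dZ true b))%VS.
Proof. exact: boundariesU. Qed.

Lemma boundaries_grB :
  boundaries gB = (boundaries (fVR dX f true a) + boundaries (VRs dZ false b))%VS.
Proof. exact: boundariesU. Qed.

Lemma boundaries_grC :
  boundaries gC = (boundaries (fVR dX f true a) + boundaries (VRs dZ true b))%VS.
Proof. exact: boundariesU. Qed.

Lemma Gbd_compC (g : chains GE) c : Gbd g (inl (inr c)) = g (c, true) + g (c, false).
Proof.
rewrite ffunE !sum_prod_bool /Gsrc /Gtgt /= [X in _ + X]big1 ?addr0 => [|i _];
  last by rewrite ?addr0.
rewrite (bigD1 c) //= !eqxx big1 ?addr0 // => i ic.
have -> : (inl (inr i) == inl (inr c) :> GV) = false.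
  by apply/eqP => -[ic']; rewrite ic' eqxx in ic.
by rewrite addr0.
Qed.

Lemma Gbd_compA (g : chains GE) p :
  Gbd g (inl (inl p)) = \sum_(c | iota c == p) g (c, false).
Proof.
rewrite ffunE !sum_prod_bool /Gsrc /Gtgt /= big1 ?add0r => [|i _]; last by rewrite ?addr0.
by rewrite [RHS]big_mkcond; apply: eq_bigr => i _; rewrite ?add0r.
Qed.

Lemma Gbd_compB (g : chains GE) q :
  Gbd g (inr q) = \sum_(c | mu c == q) g (c, true).
Proof.
rewrite ffunE !sum_prod_bool /Gsrc /Gtgt /= big1 ?add0r => [|i _]; last by rewrite ?addr0.
by rewrite [RHS]big_mkcond; apply: eq_bigr => i _; rewrite ?addr0.
Qed.

Lemma H1G_double :
  H1G dX dZ f a b = (linfun (@double (pi0 gC)) @: ker_H0ind2 gC gA gB)%VS.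
Proof.
apply/eqP; rewrite eqEsubv; apply/andP; split.
  apply/subvP => g; rewrite memv_ker lfunE /= => /eqP g0.
  have g_true c : g (c, true) = g (c, false).
    by apply: F2_addr0_eq; rewrite -Gbd_compC g0 ffunE.
  have -> : g = linfun (@double _) [ffun c => g (c, false)].
    by rewrite lfunE; apply/ffunP => -[c []]; rewrite !ffunE ?g_true.
  apply/memv_img/memv_capP; split; rewrite memv_ker lfunE /=; apply/pushf_eq0P => p;
    under eq_bigr do rewrite ffunE.
    by rewrite -Gbd_compA g0 ffunE.
  by under eq_bigr do rewrite -g_true; rewrite -Gbd_compB g0 ffunE.
apply/subvP => _ /memv_imgP [u /memv_capP [u1 u2] ->].
rewrite memv_ker lfunE /= in u1; rewrite memv_ker lfunE /= in u2.
move/pushf_eq0P: u1 => u1; move/pushf_eq0P: u2 => u2.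
rewrite memv_ker !lfunE /=; apply/eqP/ffunP => -[[p|c]|q]; rewrite [RHS]ffunE.
- by rewrite Gbd_compA; under eq_bigr do rewrite ffunE; exact: u1.
- by rewrite Gbd_compC !ffunE F2_addrr.
- by rewrite Gbd_compB; under eq_bigr do rewrite ffunE; exact: u2.
Qed.

Lemma dim_H1G : \dim (H1G dX dZ f a b) = \dim (ker_H0ind2 gC gA gB).
Proof.
rewrite H1G_double limg_dim_eq //.
have /eqP -> : lker (linfun (@double (pi0 gC))) == 0%VS.
  by apply/lker0P => u v; rewrite !lfunE; apply: double_inj.
exact: capv0.
Qed.

End GraphG.

Theorem proposition3p1 (R : realType) (X Z : finType)
  (dX : X -> X -> R) (dZ : Z -> Z -> R) (f : X -> Z) (a b : R) :
  is_metric dX -> is_metric dZ ->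
  barcode dX a -> barcode dZ b ->
  Mf dX dZ f a b = \dim (H1G dX dZ f a b).
Proof.
move=> [dX_ge0 _ _ _] [dZ_ge0 _ _ _] _ _.
rewrite /Mf /qdim f0_kerP f0_kerM // kerP_boundaries kerM_boundaries //.
rewrite dim_H1G dim_ker_H0ind2; [|exact: subrel_grCA | exact: subrel_grCB].
rewrite boundaries_grA boundaries_grB boundaries_grC.
by apply: dimv_butterfly; apply: boundaries_mono; [apply: subrel_fVR | apply: subrel_VRs].
Qed.
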